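(* Let $n\ge2$, $\mathbb W:=\mathbb R^{n\times n}_{\mathrm{sym}}$ with the Frobenius inner product, $D:=\{W\in\mathbb W: W\succeq0,\ \operatorname{rank}W\le1\}$, $G\colon\mathbb W\to\mathbb R^n$, $G(W):=\operatorname{diag}W$, and $C:=\{e\}$ with $e$ the all-ones vector. Let $W$ be feasible, i.e., $W\in D$ and $\operatorname{diag}W=e$; write $W=nuu^\top$ with $u\in\{\pm n^{-1/2}\}^n$. Then $\mathcal N^{\lim}_D(W)\subset\{Y\in\mathbb W: Yu=0\}$, and GMFCQ holds at $W$: whenever $\lambda\in\mathbb R^n$ and $Y\in\mathcal N^{\lim}_D(W)$ satisfy $\operatorname{Diag}(\lambda)+Y=0$, then $\lambda=0$.
   Context: For a closed set $D\subset\mathbb W$, $\Pi_D$ is the (multivalued) Frobenius-norm projection and the limiting normal cone at $\bar W\in D$ is $\mathcal N^{\lim}_D(\bar W):=\limsup_{W'\to\bar W}\operatorname{cone}(W'-\Pi_D(W'))$ (outer set limit). $\operatorname{Diag}(\lambda)$ is the diagonal matrix with diagonal $\lambda$; note $G'(W)^*\lambda=\operatorname{Diag}(\lambda)$ and $\mathcal N_C(G(W))=\mathbb R^n$, so this is the condition $0\in G'(W)^*\lambda+\mathcal N^{\lim}_D(W),\ \lambda\in\mathcal N_C(G(W))\Rightarrow\lambda=0$. Every feasible $W$ has the form $nuu^\top$ with $u\in\{\pm n^{-1/2}\}^n$. *)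

From HB Require Import structures.
From mathcomp Require Import all_boot all_order all_algebra.
From mathcomp Require Import all_classical all_reals all_analysis.
Import numFieldNormedType.Exports.
Set Implicit Arguments. Unset Strict Implicit. Unset Printing Implicit Defensive.
Import Order.TTheory GRing.Theory Num.Theory.
Local Open Scope ring_scope.
Local Open Scope classical_set_scope.

Section Defs.
Variables (R : realType) (n : nat).

Definition symmx : set 'M[R]_(n, n) := [set W | W^T = W].

Definition frob_inner (A B : 'M[R]_(n, n)) : R := \tr (A^T *m B).
Definition frob_norm (A : 'M[R]_(n, n)) : R := Num.sqrt (frob_inner A A).

Definition psd (W : 'M[R]_(n, n)) : Prop :=
  forall x : 'cV[R]_n, 0 <= (x^T *m W *m x) 0 0.

Definition Dset : set 'M[R]_(n, n) :=
  [set W | symmx W /\ psd W /\ (\rank W <= 1)%N].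

Definition proj (S : set 'M[R]_(n, n)) (W : 'M[R]_(n, n)) : set 'M[R]_(n, n) :=
  [set P | S P /\ forall Q, S Q -> frob_norm (W - P) <= frob_norm (W - Q)].

Definition cone (A : set 'M[R]_(n, n)) : set 'M[R]_(n, n) :=
  [set Y | exists t : R, exists2 a, A a & 0 <= t /\ Y = t *: a].

Definition proj_residual (S : set 'M[R]_(n, n)) (W' : 'M[R]_(n, n)) : set 'M[R]_(n, n) :=
  [set W' - P | P in proj S W'].

(* limiting normal cone: outer limit, as W' -> Wbar within the space W of
   symmetric matrices, of cone(W' - Pi_S(W')) *)
Definition lim_normal_cone (S : set 'M[R]_(n, n)) (Wbar : 'M[R]_(n, n)) : set 'M[R]_(n, n) :=
  [set Y | exists (Wk Yk : nat -> 'M[R]_(n, n)),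
     (forall k, symmx (Wk k)) /\ Wk @ \oo --> Wbar /\ Yk @ \oo --> Y /\
     (forall k, cone (proj_residual S (Wk k)) (Yk k))].

Definition diagv (W : 'M[R]_(n, n)) : 'rV[R]_n := \row_i W i i.

End Defs.

(* The key fact is that a projection P of a symmetric W' onto D
   satisfies (W' - P) P = 0: D is invariant under the congruences
   P |-> (1 + s H) P (1 + s H)^T, so minimality of ||W' - P|| along these
   curves forces the first-order term <W' - P, H P + P H^T> to vanish for
   every H, and the choice H = (W' - P) P turns this into ||(W' - P) P||^2 = 0.
   Moreover projections of points converging to a point W of D converge to W.
   Passing to the limit in the product, every limiting normal Y to D at W is
   symmetric and satisfies Y W = 0.

   For the feasible point W = n u u^T with u^T u = 1 this gives Y u = 0.  If
   Diag(lam) + Y = 0 then Diag(lam) u = 0, and since no entry of u vanishes,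
   lam = 0: this is GMFCQ at W. *)
From Pilot Require Import Defs.
From HB Require Import structures.
From mathcomp Require Import all_boot all_order all_algebra.
From mathcomp Require Import all_classical all_reals all_analysis.
From mathcomp Require Import ring.
Set Implicit Arguments. Unset Strict Implicit.
Import numFieldNormedType.Exports.
Import Order.TTheory GRing.Theory Num.Theory.
Local Open Scope ring_scope.
Local Open Scope classical_set_scope.

Section PolySign.
Variable R : realType.

(* A polynomial p with s p(s) >= 0 for all s changes sign at 0, hence vanishes
   there by continuity. *)
Lemma poly_sign_root (p : {poly R}) : (forall s, 0 <= s * p.[s]) -> p.[0] = 0.
Proof.
move=> sign; have p_cont : p.[s] @[s --> 0] --> p.[0] := @continuous_horner R p 0.
apply/eqP; rewrite eq_le; apply/andP; split.
- apply: (cvgr_to_le (cvg_at_left_filter p_cont)).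
  near=> s; have s_neg : s < 0 by near: s; exact: nbhs_left_lt.
  by rewrite -(nmulr_rge0 _ s_neg) sign.
- apply: (cvgr_to_ge (cvg_at_right_filter p_cont)).
  near=> s; have s_pos : 0 < s by near: s; exact: nbhs_right_gt.
  by rewrite -(pmulr_rge0 _ s_pos) sign.
Unshelve. all: by end_near.
Qed.

(* The linear coefficient of a nonnegative quartic without constant term is 0;
   this is the first-order optimality condition along a polynomial curve. *)
Lemma quartic_sign_root (a b c d : R) :
  (forall s, 0 <= a * s + b * s ^+ 2 + c * s ^+ 3 + d * s ^+ 4) -> a = 0.
Proof.
move=> sign; suff : (Poly [:: a; b; c; d]).[0] = 0.
  by rewrite horner_Poly /= mul0r add0r mulr0 add0r.
apply: poly_sign_root => s; rewrite horner_Poly /=.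
by have := sign s; congr (0 <= _); ring.
Qed.
End PolySign.

Section FrobeniusInner.
Variables (R : realType) (n : nat).
Implicit Types A B C H P S X : 'M[R]_(n, n).

Lemma frob_innerE A B : frob_inner A B = \sum_i \sum_j A j i * B j i.
Proof.
rewrite /frob_inner /mxtrace; apply: eq_bigr => i _; rewrite mxE.
by apply: eq_bigr => j _; rewrite mxE.
Qed.

Lemma frob_innerC A B : frob_inner A B = frob_inner B A.
Proof. by rewrite /frob_inner -mxtrace_tr trmx_mul trmxK. Qed.

Lemma frob_innerDr A B C : frob_inner A (B + C) = frob_inner A B + frob_inner A C.
Proof. by rewrite /frob_inner mulmxDr mxtraceD. Qed.

Lemma frob_innerZr a A B : frob_inner A (a *: B) = a * frob_inner A B.
Proof. by rewrite /frob_inner -scalemxAr mxtraceZ. Qed.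

Lemma frob_innerNr A B : frob_inner A (- B) = - frob_inner A B.
Proof. by rewrite -scaleN1r frob_innerZr mulN1r. Qed.

Lemma frob_innerDl A B C : frob_inner (A + B) C = frob_inner A C + frob_inner B C.
Proof. by rewrite !(frob_innerC _ C) frob_innerDr. Qed.

Lemma frob_innerZl a A B : frob_inner (a *: A) B = a * frob_inner A B.
Proof. by rewrite !(frob_innerC _ B) frob_innerZr. Qed.

Lemma frob_innerNl A B : frob_inner (- A) B = - frob_inner A B.
Proof. by rewrite !(frob_innerC _ B) frob_innerNr. Qed.

Lemma frob_inner_entry_le A i j : A i j ^+ 2 <= frob_inner A A.
Proof.
rewrite frob_innerE (bigD1 j) //= (bigD1 i) //= -addrA expr2 lerDl.
have sq_ge0 (x : R) : 0 <= x * x by rewrite -expr2 sqr_ge0.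
by apply: addr_ge0; apply: sumr_ge0 => *; rewrite ?sumr_ge0.
Qed.

Lemma frob_inner_ge0 A : 0 <= frob_inner A A.
Proof.
rewrite frob_innerE; apply: sumr_ge0 => i _; apply: sumr_ge0 => j _.
by rewrite -expr2 sqr_ge0.
Qed.

Lemma frob_inner_eq0 A : frob_inner A A = 0 -> A = 0.
Proof.
move=> A0; apply/matrixP => i j; rewrite mxE; apply/eqP.
by rewrite -sqrf_eq0 eq_le sqr_ge0 andbT -A0 frob_inner_entry_le.
Qed.

Lemma frob_norm_le A B : frob_norm A <= frob_norm B -> frob_inner A A <= frob_inner B B.
Proof. by rewrite /frob_norm ler_sqrt // frob_inner_ge0. Qed.

Lemma frob_inner_perturb X A B s :
  let E := s *: A + s ^+ 2 *: B in
  frob_inner (X - E) (X - E) =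
  frob_inner X X - 2 * s * frob_inner X A
  + s ^+ 2 * (frob_inner A A - 2 * frob_inner X B)
  + 2 * s ^+ 3 * frob_inner A B + s ^+ 4 * frob_inner B B.
Proof.
rewrite /= !(frob_innerDl, frob_innerDr, frob_innerNl, frob_innerNr,
  frob_innerZl, frob_innerZr) (frob_innerC A X) (frob_innerC B X) (frob_innerC B A).
ring.
Qed.

Lemma frob_inner_congr_dir S P H : S^T = S -> P^T = P ->
  frob_inner S (H *m P + P *m H^T) = 2 * frob_inner (S *m P) H.
Proof.
move=> sS sP; rewrite /frob_inner sS trmx_mul sP sS mulmxDr mxtraceD.
have -> : \tr (S *m (P *m H^T)) = \tr (S *m (H *m P)).
  by rewrite -mxtrace_tr !trmx_mul trmxK sP sS mulmxA mxtrace_mulC mulmxA.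
by rewrite -mulmxA (mxtrace_mulC P) !mulmxA mulr_natl mulr2n.
Qed.

End FrobeniusInner.

Section ProjectionOntoD.
Variables (R : realType) (n : nat).
Implicit Types H M P W : 'M[R]_(n, n).

Lemma Dset_congr M P : Dset P -> Dset (M *m P *m M^T).
Proof.
move=> [sP [pP rP]]; split; [|split].
- by rewrite /symmx /= !trmx_mul trmxK sP mulmxA.
- by move=> x; have := pP (M^T *m x); rewrite trmx_mul trmxK !mulmxA.
- by rewrite (leq_trans (mxrankM_maxl _ _)) // (leq_trans (mxrankM_maxr _ _)).
Qed.

Lemma congr_curveE H P s :
  (1%:M + s *: H) *m P *m (1%:M + s *: H)^T =
  P + (s *: (H *m P + P *m H^T) + s ^+ 2 *: (H *m P *m H^T)).
Proof.
rewrite linearD /= trmx1 linearZ /= !mulmxDl !mulmxDr !mul1mx !mulmx1.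
rewrite -!scalemxAl -!scalemxAr scalerA -expr2 scalerDr !addrA.
by congr (_ + _); rewrite -!addrA; congr (_ + _); rewrite addrC.
Qed.

(* First-order optimality of a projection along the congruence curves:
   the residual W - P is orthogonal to every direction H P + P H^T. *)
Lemma proj_stationary W P H :
  Defs.proj (@Dset R n) W P -> frob_inner (W - P) (H *m P + P *m H^T) = 0.
Proof.
move=> [DP P_min]; set A := H *m P + P *m H^T; set B := H *m P *m H^T.
suff : -2 * frob_inner (W - P) A = 0.
  by move/eqP; rewrite mulf_eq0 oppr_eq0 pnatr_eq0 /= => /eqP.
apply: (@quartic_sign_root _ _ (frob_inner A A - 2 * frob_inner (W - P) B)
  (2 * frob_inner A B) (frob_inner B B)) => s.
have := frob_norm_le (P_min _ (Dset_congr (1%:M + s *: H) DP)).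
rewrite congr_curveE opprD addrA frob_inner_perturb -subr_ge0 -/A -/B.
by congr (0 <= _); ring.
Qed.

Lemma proj_residual_mulmx W P : symmx W -> Defs.proj (@Dset R n) W P -> (W - P) *m P = 0.
Proof.
move=> sW projP; have [[sP _] _] := projP.
have sRes : (W - P)^T = W - P by rewrite linearB /= sP sW.
apply: frob_inner_eq0; have := proj_stationary ((W - P) *m P) projP.
by rewrite frob_inner_congr_dir // => /eqP; rewrite mulf_eq0 pnatr_eq0 => /eqP.
Qed.

End ProjectionOntoD.

Section LimitingNormalCone.
Variables (R : realType) (n : nat).
Implicit Types (Ak Bk : nat -> 'M[R]_(n, n)) (A B W Y : 'M[R]_(n, n)).

Lemma entry_cvg Ak A i j : Ak @ \oo --> A -> (fun k => Ak k i j) @ \oo --> A i j.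
Proof. exact: continuous_cvg _ (@coord_continuous R n n i j A). Qed.

Lemma cvg_sum (I : finType) (f : I -> nat -> R) (l : I -> R) :
  (forall i, f i @ \oo --> l i) -> (fun k => \sum_i f i k) @ \oo --> \sum_i l i.
Proof. by move=> cvgf; apply: cvg_big => //; exact: add_continuous. Qed.

Lemma mulmx_entry_cvg Ak Bk A B :
  (forall i j, (fun k => Ak k i j) @ \oo --> A i j) ->
  (forall i j, (fun k => Bk k i j) @ \oo --> B i j) ->
  forall i j, (fun k => (Ak k *m Bk k) i j) @ \oo --> (A *m B) i j.
Proof.
move=> cvgA cvgB i j; rewrite mxE; under eq_fun do rewrite mxE.
by apply: (@cvg_sum _ (fun l k => Ak k i l * Bk k l j)) => l; exact: cvgM.
Qed.

Lemma frob_inner_cvg0 Ak :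
  (forall i j, (fun k => Ak k i j) @ \oo --> 0) ->
  (fun k => frob_inner (Ak k) (Ak k)) @ \oo --> 0.
Proof.
move=> cvgA; under eq_fun do rewrite frob_innerE.
have sum0 : \sum_(i < n) \sum_(j < n) (0 : R) * 0 = 0.
  by rewrite big1 // => i _; rewrite big1 // => j _; rewrite mulr0.
suff : (fun k => \sum_i \sum_j Ak k j i * Ak k j i) @ \oo -->
  \sum_(i < n) \sum_(j < n) (0 : R) * 0 by rewrite sum0.
apply: (@cvg_sum _ (fun i k => \sum_j Ak k j i * Ak k j i)) => i.
by apply: (@cvg_sum _ (fun j k => Ak k j i * Ak k j i)) => j; exact: cvgM.
Qed.

Lemma cvg0_of_sqr_le (d e : nat -> R) :
  (forall k, d k ^+ 2 <= e k) -> e @ \oo --> 0 -> d @ \oo --> 0.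
Proof.
move=> de e0; have sqrt_e0 : (fun k => Num.sqrt (e k)) @ \oo --> 0.
  by rewrite -sqrtr0; exact: (continuous_cvg _ (@sqrt_continuous R 0) e0).
apply: (@squeeze_cvgr _ _ _ _ (fun k => - Num.sqrt (e k)) (fun k => Num.sqrt (e k))).
- apply: nearW => k; rewrite -ler_norml -sqrtr_sqr ler_sqrt ?de //.
  exact: le_trans (sqr_ge0 _) (de k).
- by rewrite -oppr0; exact: cvgN.
- exact: sqrt_e0.
Qed.

Lemma proj_entry_cvg Wk Pk W :
  Dset W -> Wk @ \oo --> W -> (forall k, Defs.proj (@Dset R n) (Wk k) (Pk k)) ->
  forall i j, (fun k => Pk k i j) @ \oo --> W i j.
Proof.
move=> DW cvgW projP i j.
have dist_le k : frob_inner (Wk k - Pk k) (Wk k - Pk k) <= frob_inner (Wk k - W) (Wk k - W).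
  by apply: frob_norm_le; exact: (projP k).2.
have dist0 : (fun k => frob_inner (Wk k - W) (Wk k - W)) @ \oo --> 0.
  apply: frob_inner_cvg0 => i' j'; under eq_fun do rewrite !mxE.
  by rewrite -(subrr (W i' j')); apply: cvgB; [exact: entry_cvg | exact: cvg_cst].
have res0 : (fun k => (Wk k - Pk k) i j) @ \oo --> 0.
  apply: cvg0_of_sqr_le dist0 => k.
  exact: le_trans (frob_inner_entry_le _ _ _) (dist_le k).
have -> : (fun k => Pk k i j) = (fun k => Wk k i j - (Wk k - Pk k) i j).
  by apply: funext => k; rewrite !mxE opprB addrC subrK.
by rewrite -[W i j]subr0; apply: cvgB => //; exact: entry_cvg.
Qed.

Lemma lim_normal_cone_annihilates W Y :
  Dset W -> lim_normal_cone (@Dset R n) W Y -> symmx Y /\ Y *m W = 0.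
Proof.
move=> DW [Wk [Yk [sWk [cvgW [cvgY coneY]]]]].
have /choice[Pk PkP] : forall k, exists P,
    Defs.proj (@Dset R n) (Wk k) P /\ Yk k *m P = 0 /\ (Yk k)^T = Yk k.
  move=> k; have [t [_ [P projP <-] [_ ->]]] := coneY k; have [[sP _] _] := projP.
  exists P; split; [done | split].
  - by rewrite -scalemxAl proj_residual_mulmx // scaler0.
  - by rewrite linearZ /= linearB /= sP (sWk k).
have cvgYe := fun i j => @entry_cvg _ _ i j cvgY.
split.
- apply/matrixP => i j; rewrite mxE.
  have cvg_ji : (fun k => Yk k j i) @ \oo --> Y i j.
    have -> : (fun k => Yk k j i) = (fun k => Yk k i j).
      by apply: funext => k; rewrite -[in LHS]((PkP k).2.2) mxE.
    exact: cvgYe.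
  exact: cvg_unique _ (cvgYe j i) cvg_ji.
- apply/matrixP => i j; rewrite [RHS]mxE.
  have cvgYP := mulmx_entry_cvg (i:=i) (j:=j) cvgYe
    (proj_entry_cvg DW cvgW (fun k => (PkP k).1)).
  have cvg0 : (fun k => (Yk k *m Pk k) i j) @ \oo --> 0.
    have -> : (fun k => (Yk k *m Pk k) i j) = (fun _ => 0).
      by apply: funext => k; rewrite (PkP k).2.1 mxE.
    exact: cvg_cst.
  exact: cvg_unique _ cvgYP cvg0.
Qed.

End LimitingNormalCone.

Section RankOneCase.
Variables (R : realType) (n : nat).
Implicit Types (Y : 'M[R]_(n, n)) (u : 'cV[R]_n).

Lemma unit_cV u : (0 < n)%N -> (forall i, u i 0 ^+ 2 = n%:R^-1) ->
  u^T *m u = 1%:M.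
Proof.
move=> n_gt0 u_sq; apply/matrixP => i j; rewrite !ord1 !mxE eqxx mulr1n.
under eq_bigr do rewrite mxE -expr2 u_sq.
by rewrite sumr_const card_ord -[_ *+ n]mulr_natr mulVf // pnatr_eq0 -lt0n.
Qed.

Lemma rank_one_annihilator Y u (c : R) : c != 0 -> u^T *m u = 1%:M ->
  Y *m (c *: (u *m u^T)) = 0 -> Y *m u = 0.
Proof.
move=> c_nz unit_u YW.
have : c *: (Y *m u) = 0.
  by rewrite -(mulmx1 (Y *m u)) -unit_u !mulmxA scalemxAl -mulmxA scalemxAr YW mul0mx.
by move/eqP; rewrite scaler_eq0 (negbTE c_nz) => /eqP.
Qed.

Lemma diag_mx_annihilator (lam : 'rV[R]_n) u : (forall i, u i 0 != 0) ->
  diag_mx lam *m u = 0 -> lam = 0.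
Proof.
move=> u_nz /matrixP lam_u; apply/rowP => i; have := lam_u i 0.
by rewrite mul_diag_mx !mxE => /eqP; rewrite mulf_eq0 (negbTE (u_nz i)) orbF => /eqP.
Qed.

End RankOneCase.

Unset Implicit Arguments. Set Strict Implicit.

Theorem mainTheorem16 (R : realType) (n : nat) (W : 'M[R]_(n, n)) (u : 'cV[R]_n) :
  (2 <= n)%N ->
  Dset W -> diagv W = const_mx 1 ->
  (forall i, u i 0 = Num.sqrt (n%:R)^-1 \/ u i 0 = - Num.sqrt (n%:R)^-1) ->
  W = n%:R *: (u *m u^T) ->
  lim_normal_cone (Dset (R:=R) (n:=n)) W `<=` [set Y | symmx Y /\ Y *m u = 0]
  /\ (forall (lam : 'rV[R]_n) (Y : 'M[R]_(n, n)),
        lim_normal_cone (Dset (R:=R) (n:=n)) W Y ->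
        diag_mx lam + Y = 0 -> lam = 0).
Proof.
move=> n_ge2 DW _ u_pm W_def.
have n_gt0 : (0 < n)%N by rewrite (leq_trans _ n_ge2).
have u_sq i : u i 0 ^+ 2 = n%:R^-1.
  by case: (u_pm i) => ->; rewrite ?sqrrN sqr_sqrtr // invr_ge0 ler0n.
have u_nz i : u i 0 != 0 by rewrite -sqrf_eq0 u_sq invr_eq0 pnatr_eq0 -lt0n.
have normal_u : lim_normal_cone (Dset (R:=R) (n:=n)) W `<=` [set Y | symmx Y /\ Y *m u = 0].
  move=> Y /(lim_normal_cone_annihilates DW) [sY YW]; split=> //.
  apply: (rank_one_annihilator (c := n%:R)) (unit_cV n_gt0 u_sq) _.
    by rewrite pnatr_eq0 -lt0n.
  by rewrite -W_def.
split=> // lam Y /normal_u [_ Yu] diag_Y.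
apply: diag_mx_annihilator u_nz _.
have -> : diag_mx lam = - Y by apply/eqP; rewrite -addr_eq0 diag_Y.
by rewrite mulNmx Yu oppr0.
Qed.
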